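(* Let $p$ be a prime and $X$ a countable set. Every $\tau$-continuous $\mathbb{Z}_p$-linear map $A:\mathbb{Q}_p(X)\to\mathbb{Q}_p(X)$ is continuous with respect to the norm $\|\cdot\|$ on $\mathbb{Q}_p(X)$.
   Context: $\mathbb{Q}_p(X)$ is the set of maps $\xi:X\to\mathbb{Q}_p$ with $|\xi(i)|_p\le1$ for all but finitely many $i$, a $\mathbb{Z}_p$-module under coordinatewise operations, with the topology $\tau$ in which $A\subseteq\mathbb{Q}_p(X)$ is open iff for every finite $P\subseteq X$ the set $A\cap\big(\prod_{i\in P}\mathbb{Q}_p\times\prod_{j\in X\setminus P}\mathbb{Z}_p\big)$ is open in the product topology. The norm is $\|\xi\|=\max_{i\in X}|\xi(i)|_p$. *)

From HB Require Import structures.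
From mathcomp Require Import all_boot all_order all_algebra.
From mathcomp Require Import boolp classical_sets cardinality reals.
Set Implicit Arguments. Unset Strict Implicit. Unset Printing Implicit Defensive.
Import Order.TTheory GRing.Theory Num.Theory.
Local Open Scope ring_scope.
Local Open Scope classical_set_scope.

Section Padic.
Variables (R : realType) (K : fieldType) (nrm : K -> R).

(* (K, nrm) is the field Q_p of p-adic numbers with its p-adic absolute
   value, i.e. the completion of (Q, |.|_p): a field with a non-archimedean
   absolute value normalised by |p| = 1/p, complete, and in which Q is dense.
   These properties determine (K, nrm) up to a unique isometric isomorphism. *)
Definition nrm_cauchy (u : nat -> K) : Prop :=
  forall eps : R, 0 < eps -> exists N : nat, forall m n : nat,
    (N <= m)%N -> (N <= n)%N -> nrm (u m - u n) < eps.
Definition nrm_converges (u : nat -> K) (l : K) : Prop :=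
  forall eps : R, 0 < eps -> exists N : nat, forall n : nat,
    (N <= n)%N -> nrm (u n - l) < eps.

Record is_Qp (p : nat) : Prop := IsQp {
  Qp_prime : prime p;
  Qp_nrm_ge0 : forall x, 0 <= nrm x;
  Qp_nrm_eq0 : forall x, nrm x = 0 <-> x = 0;
  Qp_nrmM : forall x y, nrm (x * y) = nrm x * nrm y;
  Qp_nrm_ultra : forall x y, nrm (x + y) <= Num.max (nrm x) (nrm y);
  Qp_nrm_p : nrm (p%:R) = (p%:R)^-1;
  Qp_complete : forall u : nat -> K, nrm_cauchy u -> exists l, nrm_converges u l;
  Qp_rat_dense : forall (x : K) (eps : R), 0 < eps ->
    exists q : rat, nrm (x - ratr q) < eps
}.

Definition padic_int : set K := [set a | nrm a <= 1].

Variable X : Type.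

Definition QpX : set (X -> K) :=
  [set xi | finite_set [set i | 1 < nrm (xi i)]].

(* prod_{i in P} Q_p x prod_{j notin P} Z_p, as a subset of K^X *)
Definition boxP (P : set X) : set (X -> K) :=
  [set xi | forall j, ~ P j -> nrm (xi j) <= 1].

(* S is open in the subspace B of the product space K^X (product topology,
   each factor with the metric topology of nrm): every point of S has a
   basic product neighbourhood (finitely many coordinates constrained)
   whose trace on B lies in S. *)
Definition prod_open_in (B S : set (X -> K)) : Prop :=
  forall xi, S xi -> exists F : set X, finite_set F /\
    exists eps : R, 0 < eps /\
      forall eta, B eta -> (forall i, F i -> nrm (eta i - xi i) < eps) -> S eta.

Definition tau_open (U : set (X -> K)) : Prop :=
  U `<=` QpX /\
  forall P : set X, finite_set P -> prod_open_in (boxP P) (U `&` boxP P).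

(* ||xi|| = max_i |xi(i)|_p (a supremum, attained on Q_p(X)) *)
Definition qnorm (xi : X -> K) : R := sup (range (fun i => nrm (xi i))).

End Padic.

(* The unit ball [B] of [Q_p(X)] is [tau]-open, so by continuity at [0] the
   preimage [A^-1(B)] contains a basic [tau]-neighbourhood of [0], and in
   particular a sup-norm ball of some radius [c > 0].  Since [A] commutes with
   multiplication by [p^k] (an element of [Z_p]), it maps the ball of radius
   [c p^-k] into the ball of radius [p^-k]; by additivity this is continuity
   at every point. *)
From HB Require Import structures.
From mathcomp Require Import all_boot all_order all_algebra.
From mathcomp Require Import boolp classical_sets cardinality reals.
Set Implicit Arguments. Unset Strict Implicit. Unset Printing Implicit Defensive.
Import Order.TTheory GRing.Theory Num.Theory.
Local Open Scope ring_scope.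
Local Open Scope classical_set_scope.

Section NonArchimedeanAbsoluteValue.
Variables (R : realType) (K : fieldType) (nrm : K -> R).
Hypotheses (nrm_ge0 : forall x, 0 <= nrm x)
  (nrm_eq0 : forall x, nrm x = 0 <-> x = 0)
  (nrmM : forall x y, nrm (x * y) = nrm x * nrm y)
  (nrm_ultra : forall x y, nrm (x + y) <= Num.max (nrm x) (nrm y)).

Lemma nrm0 : nrm 0 = 0. Proof. exact/nrm_eq0. Qed.

Lemma nrm_neq0 x : x != 0 -> nrm x != 0.
Proof. by apply: contra => /eqP/nrm_eq0 ->. Qed.

Lemma nrm1 : nrm 1 = 1.
Proof.
apply: (mulfI (nrm_neq0 (oner_neq0 K))).
by rewrite -nrmM !mulr1.
Qed.

Lemma nrmN x : nrm (- x) = nrm x.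
Proof.
have nrmN1 : nrm (-1) = 1.
  have := nrmM (-1) (-1); rewrite mulrNN mulr1 nrm1 => /esym/eqP.
  rewrite -expr2 sqrf_eq1 => /orP[/eqP //|/eqP nrm_neg].
  by have := nrm_ge0 (-1); rewrite nrm_neg ler0N1.
by rewrite -mulN1r nrmM nrmN1 mul1r.
Qed.

Lemma nrmV x : x != 0 -> nrm x^-1 = (nrm x)^-1.
Proof.
move=> x0; apply: (mulfI (nrm_neq0 x0)).
by rewrite -nrmM !mulfV ?nrm_neq0 ?nrm1.
Qed.

Lemma nrmX x k : nrm (x ^+ k) = nrm x ^+ k.
Proof. by elim: k => [|k IHk]; rewrite ?expr0 ?nrm1 // !exprS nrmM IHk. Qed.

Lemma nrmB_le_max x y : nrm (x - y) <= Num.max (nrm x) (nrm y).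
Proof. by rewrite -(nrmN y) nrm_ultra. Qed.

Variable X : Type.

Lemma boxP0E (z : X -> K) : boxP nrm set0 z <-> forall j, nrm (z j) <= 1.
Proof. by split=> zle j //; apply: zle. Qed.

Lemma QpX_box0 (z : X -> K) : boxP nrm set0 z -> QpX nrm z.
Proof.
move=> /boxP0E zle; apply: (sub_finite_set _ (finite_set0 X)) => j /=.
by rewrite ltNge zle.
Qed.

Lemma QpXB (xi eta : X -> K) :
  QpX nrm xi -> QpX nrm eta -> QpX nrm (fun i => eta i - xi i).
Proof.
move=> Qxi Qeta.
have finU : finite_set ([set i | 1 < nrm (eta i)] `|` [set i | 1 < nrm (xi i)]).
  by rewrite finite_setU.
apply: (sub_finite_set _ finU) => i /=; rewrite ltNge => /negP big.
have [|eta_le] := ltP 1 (nrm (eta i)); [by left | right].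
rewrite ltNge; apply/negP; apply: contra_not big => xi_le.
by rewrite (le_trans (nrmB_le_max _ _)) // ge_max eta_le.
Qed.

Lemma qnorm_ub (z : X -> K) i : QpX nrm z -> nrm (z i) <= qnorm nrm z.
Proof.
move=> Qz; apply: ub_le_sup; last by exists i.
have /(finite_image (fun j => nrm (z j))) /finite_seqP [s s_big] := Qz.
exists (Num.max 1 (\big[Num.max/1]_(y <- s) y)) => _ [j _ <-].
rewrite le_max; have [big|//] := ltP 1 (nrm (z j)).
have s_j : [set` s] (nrm (z j)) by rewrite -s_big; exists j.
by rewrite (le_bigmax_seq 1 _ xpredT id s_j) ?orbT.
Qed.

Lemma qnorm_le (z : X -> K) (b : R) :
  0 <= b -> (forall i, nrm (z i) <= b) -> qnorm nrm z <= b.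
Proof.
move=> b0 zle; have [[_ [j _ _]]|no_elt] := pselect (range (fun i => nrm (z i)) !=set0).
  by apply: ge_sup => [|_ [i _ <-]]; [exists (nrm (z j)), j|].
rewrite /qnorm; suff -> : range (fun i => nrm (z i)) = set0 by rewrite sup0.
by apply/seteqP; split=> y // range_y; apply: no_elt; exists y.
Qed.

Lemma tau_open_box0 : tau_open nrm (boxP nrm (@set0 X)).
Proof.
split=> [z /QpX_box0 //|P finP z [/boxP0E z_le _]].
exists P; split=> //; exists 1; split=> // eta eta_box near_z; split=> //.
apply/boxP0E => j; have [Pj|] := pselect (P j); last exact: eta_box.
have -> : eta j = z j + (eta j - z j) by rewrite addrC subrK.
by rewrite (le_trans (nrm_ultra _ _)) // ge_max z_le ltW ?near_z.
Qed.

Section TauContinuousMap.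
Variable A : (X -> K) -> (X -> K).
Hypotheses (hAadd : forall xi eta, QpX nrm xi -> QpX nrm eta ->
     A (fun i => xi i + eta i) = (fun i => A xi i + A eta i))
  (hAscal : forall (a : K) xi, padic_int nrm a -> QpX nrm xi ->
     A (fun i => a * xi i) = (fun i => a * A xi i))
  (hAcont : forall U, tau_open nrm U ->
     tau_open nrm [set xi | QpX nrm xi /\ U (A xi)]).

Lemma QpX0 : QpX nrm (fun _ : X => 0).
Proof. by apply/QpX_box0/boxP0E => j; rewrite nrm0 ?ler01. Qed.

Lemma linear_map0 : A (fun=> 0) = fun=> 0.
Proof.
have := hAadd QpX0 QpX0; under eq_fun do rewrite addr0.
move=> A0; apply/funext => i; have /= A0i := congr1 (fun f => f i) A0.
by apply: (addrI (A (fun=> 0) i)); rewrite addr0 -A0i.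
Qed.

Lemma linear_mapB xi eta : QpX nrm xi -> QpX nrm eta ->
  A (fun i => eta i - xi i) = (fun i => A eta i - A xi i).
Proof.
move=> Qxi Qeta; apply/funext => i.
have := congr1 (fun f => f i) (hAadd Qxi (QpXB Qxi Qeta)).
by under eq_fun do rewrite addrC subrK; move=> /= ->; rewrite addrC addKr.
Qed.

Lemma unit_box_preimage_contains_ball : exists2 c : R, 0 < c <= 1 &
  forall z, (forall j, nrm (z j) < c) -> forall j, nrm (A z j) <= 1.
Proof.
have [_ open_pre] := hAcont tau_open_box0.
have pre0 : ([set xi | QpX nrm xi /\ boxP nrm set0 (A xi)] `&` boxP nrm set0) (fun=> 0).
  by rewrite /= linear_map0; split; [split; first exact: QpX0|];
     apply/boxP0E => j; rewrite nrm0 ?ler01.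
have [F [_ [e [e0 near0]]]] := open_pre set0 (finite_set0 X) _ pre0.
exists (Num.min e 1) => [|z small j]; first by rewrite lt_min e0 ltr01 ge_min lexx orbT.
have z_box : boxP nrm set0 z.
  by apply/boxP0E => i; have := small i; rewrite lt_min => /andP[_ /ltW].
have z_near0 i : F i -> nrm (z i - 0) < e.
  by rewrite subr0; have := small i; rewrite lt_min => /andP[].
by have [[_ /boxP0E Az_le] _] := near0 z z_box z_near0; apply: Az_le.
Qed.

Lemma scaled_ball_image_bounded : exists2 c : R, 0 < c &
  forall a z, padic_int nrm a -> (forall j, nrm (z j) < c * nrm a) ->
  forall j, nrm (A z j) <= nrm a.
Proof.
have [c /andP[c0 c1] unit_ball] := unit_box_preimage_contains_ball.
exists c => // a z a_int z_small j.
have [a0|a_neq0] := eqVneq a 0.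
  by have := z_small j; rewrite a0 nrm0 mulr0 ltNge nrm_ge0.
have a_gt0 : 0 < nrm a by rewrite lt_def nrm_neq0 ?nrm_ge0.
pose y i := a^-1 * z i.
have y_small i : nrm (y i) < c by rewrite nrmM nrmV // mulrC ltr_pdivrMr.
have Qy : QpX nrm y.
  by apply/QpX_box0/boxP0E => i; exact: ltW (lt_le_trans (y_small i) c1).
have -> : z = fun i => a * y i by apply/funext => i; rewrite /y mulrA mulfV ?mul1r.
rewrite hAscal // nrmM -[leRHS]mulr1 ler_wpM2l ?nrm_ge0 //.
exact: unit_ball.
Qed.

End TauContinuousMap.

End NonArchimedeanAbsoluteValue.

Lemma exists_expr_invn_lt (R : realType) (p : nat) (eps : R) :
  (1 < p)%N -> 0 < eps -> exists k, p%:R^-1 ^+ k < eps.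
Proof.
move=> p_gt1 eps_gt0; have [k] := ltr_add_invr eps_gt0; rewrite add0r => k_lt.
exists k; apply: le_lt_trans k_lt.
rewrite exprVn -natrX lef_pV2 ?posrE ?ltr0n ?expn_gt0 ?(ltnW p_gt1) //.
by rewrite ler_nat ltn_expl.
Qed.

Theorem lemma2p15 (R : realType) (K : fieldType) (nrm : K -> R) (p : nat)
  (hQp : is_Qp nrm p)
  (X : Type) (hX : exists f : X -> nat, injective f)
  (A : (X -> K) -> (X -> K))
  (hAdom : forall xi, QpX nrm xi -> QpX nrm (A xi))
  (hAadd : forall xi eta, QpX nrm xi -> QpX nrm eta ->
     A (fun i => xi i + eta i) = (fun i => A xi i + A eta i))
  (hAscal : forall (a : K) xi, padic_int nrm a -> QpX nrm xi ->
     A (fun i => a * xi i) = (fun i => a * A xi i))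
  (hAcont : forall U, tau_open nrm U ->
     tau_open nrm [set xi | QpX nrm xi /\ U (A xi)]) :
  forall xi, QpX nrm xi -> forall eps : R, 0 < eps ->
    exists delta : R, 0 < delta /\
      forall eta, QpX nrm eta -> qnorm nrm (fun i => eta i - xi i) < delta ->
        qnorm nrm (fun i => A eta i - A xi i) < eps.
Proof.
case: hQp => p_prime nrm_ge0 nrm_eq0 nrmM nrm_ultra nrm_p _ _.
have [c c_gt0 scaled] :=
  scaled_ball_image_bounded nrm_ge0 nrm_eq0 nrmM nrm_ultra hAadd hAscal hAcont.
move=> xi Qxi eps eps_gt0.
have [k pk_lt] := exists_expr_invn_lt (prime_gt1 p_prime) eps_gt0.
have p_inv_gt0 : 0 < p%:R^-1 :> R by rewrite invr_gt0 ltr0n prime_gt0.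
have nrm_pk : nrm (p%:R ^+ k) = p%:R^-1 ^+ k by rewrite (nrmX nrm_eq0 nrmM) nrm_p.
have pk_int : padic_int nrm (p%:R ^+ k).
  rewrite /padic_int /= nrm_pk; apply: exprn_ile1; first exact: ltW.
  by rewrite invf_le1 ?ltr0n ?ler1n prime_gt0.
exists (c * p%:R^-1 ^+ k); split; first by rewrite mulr_gt0 ?exprn_gt0.
move=> eta Qeta eta_near; rewrite -(linear_mapB nrm_ge0 nrm_eq0 nrmM nrm_ultra hAadd) //.
apply: le_lt_trans pk_lt; apply: qnorm_le; first by rewrite exprn_ge0 ?ltW.
rewrite -nrm_pk; apply: scaled => // i; rewrite nrm_pk.
exact: le_lt_trans (qnorm_ub i (QpXB nrm_ge0 nrm_eq0 nrmM nrm_ultra Qxi Qeta)) eta_near.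
Qed.
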